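(* Let $\mathcal{H}$ be a separable Hilbert space with orthonormal basis $(e_i)_{i\in\mathbb{N}}$, $G$ a finite collection of pairwise disjoint finite groups $g\subset\mathbb{N}$, $K\ge2$ an integer, and $\Sigma=\Sigma_K$ the $K$-group-sparse model. Then uniform recovery of $\Sigma_K$ with the regularizer $\|\cdot\|_\Sigma$ is impossible: the descent set $\mathcal{T}_{\|\cdot\|_\Sigma}(\Sigma)$ equals $\mathcal{E}(\Sigma)$, so that for every linear operator $M$ whose null space contains a nonzero element of $\mathcal{E}(\Sigma)$ there exists $x_0\in\Sigma_K$ which is not the unique minimizer of $\min_{x}\|x\|_\Sigma$ subject to $Mx=Mx_0$.
   Context: $x_g=\sum_{i\in g}\langle x,e_i\rangle e_i$; the group support of $x$ is the smallest $H\subset G$ with $\sum_{g\in H}x_g=x$; $\Sigma_K=\{x:|\text{group support}(x)|\le K\}$. $\|\cdot\|_\Sigma$ is the atomic norm with atoms $\Sigma\cap S(1)$ ($S(1)$ the unit sphere): $\|x\|_\Sigma=\inf\{t\ge0:x\in t\cdot\overline{\mathrm{conv}}(\Sigma\cap S(1))\}$, $+\infty$ if none; $\mathcal{E}(\Sigma)=\{x:\|x\|_\Sigma<\infty\}=\mathbb{R}_+\cdot\overline{\mathrm{conv}}(\Sigma\cap S(1))$. Descent set: $\mathcal{T}_{f}(\Sigma)=\bigcup_{x\in\Sigma}\{z:f(x+z)\le f(x)\}$. *)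

From HB Require Import structures.
From mathcomp Require Import all_boot all_order all_algebra finmap.
From mathcomp Require Import all_classical all_reals all_analysis.
Set Implicit Arguments. Unset Strict Implicit. Unset Printing Implicit Defensive.
Import Order.TTheory GRing.Theory Num.Theory.
Import numFieldNormedType.Exports.
Local Open Scope classical_set_scope.
Local Open Scope ring_scope.
Local Open Scope fset_scope.

Section GroupSparse.
Variables (R : realType) (V : normedModType R).
Variables (ip : V -> V -> R) (e : nat -> V).

Definition gproj (g : {fset nat}) (x : V) : V :=
  \sum_(i <- g) ip x (e i) *: e i.

Definition is_group_support (G H : {fset {fset nat}}) (x : V) : Prop :=
  [/\ H `<=` G, \sum_(g <- H) gproj g x = x &
      forall H', H' `<=` G -> \sum_(g <- H') gproj g x = x -> H `<=` H'].

Definition Sigma_K (G : {fset {fset nat}}) (K : nat) : set V :=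
  [set x | exists H, is_group_support G H x /\ (#|` H| <= K)%N].

End GroupSparse.

Section Atomic.
Variables (R : realType) (V : normedModType R).

Definition unit_sphere : set V := [set x | `|x| = 1].

Definition conv_hull (A : set V) : set V :=
  [set x | exists n (w : 'I_n -> R) (a : 'I_n -> V),
     [/\ forall i, 0 <= w i, \sum_(i < n) w i = 1, forall i, A (a i)
       & x = \sum_(i < n) w i *: a i]].

Definition scale_set (t : R) (A : set V) : set V := [set t *: a | a in A].

(* atomic norm with atoms Sigma ∩ S(1); +oo if no t works *)
Definition atomic_norm (Sigma : set V) (x : V) : \bar R :=
  ereal_inf [set t%:E | t in
    [set t : R | 0 <= t /\ scale_set t (closure (conv_hull (Sigma `&` unit_sphere))) x]].

Definition cE (Sigma : set V) : set V :=
  [set x | (atomic_norm Sigma x < +oo)%E].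

Definition descent_set (f : V -> \bar R) (Sigma : set V) : set V :=
  \bigcup_(x in Sigma) [set z | (f (x + z)%R <= f x)%E].

Definition unique_minimizer (W : lmodType R) (f : V -> \bar R) (M : V -> W) (x0 : V) : Prop :=
  forall x, M x = M x0 -> x <> x0 -> (f x0 < f x)%E.

End Atomic.

From HB Require Import structures.
From mathcomp Require Import all_boot all_order all_algebra finmap.
From mathcomp Require Import all_classical all_reals all_analysis.
From mathcomp Require Import ring lra.
Set Implicit Arguments.
Unset Strict Implicit.
Unset Printing Implicit Defensive.
Import Order.TTheory GRing.Theory Num.Theory.
Import numFieldNormedType.Exports.
Local Open Scope classical_set_scope.
Local Open Scope ring_scope.

(* Let Gproj y := \sum_(g in G) y_g be the orthogonal projection onto the span
   of the groups.  It is linear and continuous and fixes Sigma_K, so it fixes the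
   closed convex hull of the atoms and hence E(Sigma); conversely a Gproj-fixed y
   is the sum of its one-group components y_g, so ||y||_Sigma <= \sum_g |y_g|.
   Thus E(Sigma) is the subspace Fix Gproj, which gives T(Sigma) <= E(Sigma).
   For the reverse inclusion let z in Fix Gproj and c := <z, e_i0> <> 0 with i0
   in a group g0.  With u := sgn(c) e_i0, L := \sum_(g <> g0) |z_g|,
   m := L / (2|c|) and x := -(z_g0 + L m u) in Sigma_1, the vector
   x + z = \sum_(g <> g0) (z_g - |z_g| m u) is a sum of two-group vectors of
   norms |z_g| sqrt(1 + m^2), whence
   ||x + z||_Sigma <= L sqrt(1 + m^2) <= |x| <= ||x||_Sigma. *)

Section InnerProduct.
Variables (R : numFieldType) (V : normedModType R) (ip : V -> V -> R).
Hypothesis ip_sym : forall x y, ip x y = ip y x.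
Hypothesis ip_lin : forall (a : R) x y z, ip (a *: x + y) z = a * ip x z + ip y z.

Lemma ipDl x y z : ip (x + y) z = ip x z + ip y z.
Proof. by have := ip_lin 1 x y z; rewrite scale1r mul1r. Qed.

Lemma ip0l z : ip 0 z = 0.
Proof. by apply: (addrI (ip 0 z)); rewrite -ipDl !addr0. Qed.

Lemma ipZl a x z : ip (a *: x) z = a * ip x z.
Proof. by have := ip_lin a x 0 z; rewrite addr0 ip0l addr0. Qed.

Lemma ipNl x z : ip (- x) z = - ip x z.
Proof. by rewrite -scaleN1r ipZl mulN1r. Qed.

Lemma ip_suml (I : Type) (s : seq I) (F : I -> V) z :
  ip (\sum_(i <- s) F i) z = \sum_(i <- s) ip (F i) z.
Proof. by elim: s => [|a s IH]; rewrite ?big_nil ?ip0l // !big_cons ipDl IH. Qed.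

Lemma ipDr x y z : ip z (x + y) = ip z x + ip z y.
Proof. by rewrite ip_sym ipDl !(ip_sym z). Qed.

Lemma ipZr a x z : ip z (a *: x) = a * ip z x.
Proof. by rewrite ip_sym ipZl ip_sym. Qed.

Lemma ipNr x z : ip z (- x) = - ip z x.
Proof. by rewrite ip_sym ipNl ip_sym. Qed.

Hypothesis ip_norm : forall x, ip x x = `|x| ^+ 2.

Lemma sqr_normD_orth x y : ip x y = 0 -> `|x + y| ^+ 2 = `|x| ^+ 2 + `|y| ^+ 2.
Proof. by move=> xy; rewrite -!ip_norm ipDl !ipDr xy (ip_sym y) xy addr0 add0r. Qed.

Lemma ip_polarization x z : ip x z = (`|x + z| ^+ 2 - `|x - z| ^+ 2) / 4.
Proof.
by rewrite -!ip_norm !ipDl !ipDr !ipNl !ipNr (ip_sym z x); field.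
Qed.

Lemma continuous_ipl z : continuous (ip^~ z).
Proof.
have normDz_cont (a : V) : continuous (fun x => `|x + a|).
  move=> x; apply: (continuous_comp (f := +%R^~ a)); last exact: norm_continuous.
  by apply: continuousD; [exact: cvg_id|exact: cst_continuous].
move=> x; under eq_fun do rewrite ip_polarization !expr2.
have nD := normDz_cont z x; have nB := normDz_cont (- z) x.
by have := continuousM (continuousB (continuousM nD nD) (continuousM nB nB))
  (@cst_continuous _ _ (4^-1 : R) x).
Qed.

End InnerProduct.

Lemma continuous_sum (T : topologicalType) (R : numFieldType) (V : normedModType R)
    (I : Type) (s : seq I) (F : I -> T -> V) :
  (forall i, continuous (F i)) -> continuous (fun y => \sum_(i <- s) F i y).
Proof.
move=> Fc; elim: s => [|a s IH].
  by under eq_fun do rewrite big_nil; exact: cst_continuous.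
under eq_fun do rewrite big_cons.
by move=> y; apply: continuousD; [exact: Fc|exact: IH].
Qed.

Section OrthogonalShift.
Variables (R : rcfType) (V : normedModType R) (ip : V -> V -> R).
Hypothesis ip_sym : forall x y, ip x y = ip y x.
Hypothesis ip_lin : forall (a : R) x y z, ip (a *: x + y) z = a * ip x z + ip y z.
Hypothesis ip_norm : forall x, ip x x = `|x| ^+ 2.

(* With [L] the sum of the [|w i|], the left side is [L * sqrt (1 + m^2)] and the
   square of the right one is [|y|^2 + 2 L m <y, u> + L^2 m^2]. *)
Lemma sum_norm_orth_shift_le (I : eqType) (s : seq I) (w : I -> V) y u m :
    `|u| = 1 -> (forall i, i \in s -> ip u (w i) = 0) -> 0 <= m ->
    \sum_(i <- s) `|w i| <= 2 * m * ip y u ->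
  \sum_(i <- s) `|w i - (`|w i| * m) *: u| <=
    `|y + ((\sum_(i <- s) `|w i|) * m) *: u|.
Proof.
move=> norm_u u_orth m_ge0; set L := \sum_(i <- s) `|w i| => L_le.
have L_ge0 : 0 <= L by rewrite sumr_ge0.
set k := Num.sqrt (1 + m ^+ 2).
have k_ge0 : 0 <= k by exact: sqrtr_ge0.
have sqr_k : k ^+ 2 = 1 + m ^+ 2 by rewrite sqr_sqrtr // addr_ge0 ?sqr_ge0.
have -> : \sum_(i <- s) `|w i - (`|w i| * m) *: u| = L * k.
  rewrite /L mulr_suml big_seq [RHS]big_seq; apply: eq_bigr => i si.
  apply/eqP; rewrite -(eqrXn2 (n := 2)) ?mulr_ge0 //.
  rewrite (sqr_normD_orth ip_sym ip_lin ip_norm); last first.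
    by rewrite (ipNr ip_sym ip_lin) (ipZr ip_sym ip_lin) ip_sym u_orth ?mulr0 ?oppr0.
  rewrite normrN normrZ norm_u mulr1 normrM normr_id (ger0_norm m_ge0).
  by apply/eqP; rewrite [RHS]exprMn sqr_k mulrDr mulr1 -exprMn.
rewrite -(ler_pXn2r (n := 2)) ?nnegrE ?mulr_ge0 // -ip_norm (ipDl ip_lin).
rewrite !(ipDr ip_sym ip_lin) !(ipZl ip_lin) !(ipZr ip_sym ip_lin) (ip_sym u).
rewrite !ip_norm norm_u exprMn sqr_k.
have := ler_wpM2l L_ge0 L_le; have := sqr_ge0 `|y|; nra.
Qed.

End OrthogonalShift.

Section AtomicNorm.
Variables (R : realType) (V : normedModType R) (Sigma : set V).
Local Notation atoms := (Sigma `&` @unit_sphere R V).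
Local Notation hull := (closure (conv_hull atoms)).

Lemma closure_conv_hull_atoms_le1 : hull `<=` [set y | `|y| <= 1].
Proof.
have closed_ball1 : closed [set y : V | `|y| <= 1].
  apply: (@preimage_closed _ _ (fun y : V => `|y|) [set r | r <= 1]).
    by move=> y _; exact: norm_continuous.
  exact: closed_le.
rewrite [X in _ `<=` X](closure_id _).1 //; apply: closureS.
move=> _ [n [w [a [w0 w1 aS ->]]]] /=.
apply: (le_trans (ler_norm_sum _ _ _)); rewrite -w1 ler_sum // => i _.
by rewrite normrZ (aS i).2 mulr1 ger0_norm.
Qed.

Lemma atomic_norm_ge_norm x : (`|x|%:E <= atomic_norm Sigma x)%E.
Proof.
apply: le_ereal_inf_tmp => _ [t [t0 [c cC <-]] <-].
rewrite lee_fin normrZ ger0_norm // -[leRHS]mulr1 ler_wpM2l //.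
exact: closure_conv_hull_atoms_le1.
Qed.

Lemma atomic_norm_le t c : 0 <= t -> hull c -> (atomic_norm Sigma (t *: c) <= t%:E)%E.
Proof. by move=> t0 cC; apply: ereal_inf_lbound; exists t => //; split => //; exists c. Qed.

Lemma conv_hull_big (A : set V) (I : eqType) (s : seq I) (w : I -> R) (a : I -> V) :
  (forall i, 0 <= w i) -> \sum_(i <- s) w i = 1 -> (forall i, i \in s -> A (a i)) ->
  conv_hull A (\sum_(i <- s) w i *: a i).
Proof.
case: s => [|i0 s] w0 w1 aA.
  by move: w1; rewrite big_nil => /eqP; rewrite eq_sym oner_eq0.
pose j (k : 'I_(size (i0 :: s))) := nth i0 (i0 :: s) k.
exists (size (i0 :: s)), (w \o j), (a \o j); split => //=.
- by rewrite -w1 (big_nth i0) big_mkord.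
- by move=> k; apply/aA/mem_nth.
- by rewrite (big_nth i0) big_mkord.
Qed.

Lemma atomic_norm_sum_le (I : eqType) (s : seq I) (v : I -> V) :
  (exists a0, atoms a0) -> (forall a x, Sigma x -> Sigma (a *: x)) ->
  (forall i, i \in s -> Sigma (v i)) ->
  (atomic_norm Sigma (\sum_(i <- s) v i)%R <= (\sum_(i <- s) `|v i|)%R%:E)%E.
Proof.
move=> [a0 a0_atom] SigmaZ Sigma_v.
have hull_a0 : hull a0.
  apply/subset_closure; have := @conv_hull_big atoms _ [:: tt] (fun=> 1) (fun=> a0).
  by rewrite !big_seq1 scale1r; apply=> //; rewrite big_seq1.
set t := \sum_(i <- s) `|v i|.
have [t0|tn0] := eqVneq t 0.
  have /eqP -> : \sum_(i <- s) v i == 0.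
    by rewrite -normr_le0 -t0 ler_norm_sum.
  by rewrite t0 -(scale0r a0) atomic_norm_le.
have t_gt0 : 0 < t by rewrite lt_def tn0 sumr_ge0.
pose b i := if v i == 0 then a0 else `|v i|^-1 *: v i.
have -> : \sum_(i <- s) v i = t *: \sum_(i <- s) (`|v i| / t) *: b i.
  rewrite scaler_sumr; apply: eq_bigr => i _; rewrite scalerA mulrCA divff ?gt_eqF // mulr1 /b.
  have [->|vi0] := eqVneq (v i) 0; first by rewrite normr0 scale0r.
  by rewrite scalerA divff ?normr_eq0 // scale1r.
apply: atomic_norm_le; first exact: ltW.
apply/subset_closure/conv_hull_big => [i||i si].
- by rewrite divr_ge0 // ltW.
- by rewrite -mulr_suml divff ?gt_eqF.
- rewrite /b; case: eqP => // /eqP vi0; split; first exact/SigmaZ/Sigma_v.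
  by rewrite /unit_sphere /= normrZ normfV normr_id mulVf ?normr_eq0.
Qed.

Lemma cE_sub_fixed (P : {linear V -> V}) : continuous P ->
  Sigma `<=` [set y | P y = y] -> cE Sigma `<=` [set y | P y = y].
Proof.
move=> Pc SigmaP; set F := [set y | P y = y].
have closedF : closed F.
  have -> : F = (fun y => `|P y - y|) @^-1` [set r | r <= 0].
    apply/seteqP; split => y /=; first by move->; rewrite subrr normr0.
    by rewrite normr_le0 subr_eq0 => /eqP.
  apply: preimage_closed; last exact: closed_le.
  move=> y _; apply: (continuous_comp (f := fun y => P y - y)); last exact: norm_continuous.
  by apply: continuousB; [exact: Pc|exact: cvg_id].
have hullF : hull `<=` F.
  rewrite [X in _ `<=` X](closure_id _).1 //; apply: closureS.
  move=> _ [n [w [a [_ _ aS ->]]]]; rewrite /F /= linear_sum.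
  by apply: eq_bigr => i _; rewrite linearZ SigmaP //; case: (aS i).
move=> x; apply: contraPP => xF; rewrite /cE /= /atomic_norm.
suff -> : [set t%:E | t in [set t : R | 0 <= t /\ scale_set t hull x]] = set0.
  by rewrite ereal_inf0 ltxx.
apply/seteqP; split => // u [t [_ [c cC cx]] _]; apply: xF.
by rewrite -cx /F /= linearZ hullF.
Qed.

End AtomicNorm.

Section GroupSparseModel.
Variables (R : realType) (V : normedModType R) (ip : V -> V -> R) (e : nat -> V).
Hypothesis ip_sym : forall x y, ip x y = ip y x.
Hypothesis ip_lin : forall (a : R) x y z, ip (a *: x + y) z = a * ip x z + ip y z.
Hypothesis ip_norm : forall x, ip x x = `|x| ^+ 2.
Hypothesis e_orthonormal : forall i j, ip (e i) (e j) = (i == j)%:R.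

Local Notation gproj := (gproj ip e).

Lemma gproj_is_linear g : linear (gproj g).
Proof.
move=> a x y; rewrite /gproj scaler_sumr -big_split; apply: eq_bigr => i _.
by rewrite ip_lin scalerDl scalerA.
Qed.

HB.instance Definition _ g :=
  GRing.isLinear.Build R V V *:%R (gproj g) (gproj_is_linear g).

Lemma norm_e i : `|e i| = 1.
Proof. by apply/eqP; rewrite -sqrp_eq1 // -ip_norm e_orthonormal eqxx. Qed.

Lemma ip_gproj_e g x j : ip (gproj g x) (e j) = if j \in g then ip x (e j) else 0.
Proof.
rewrite /gproj (ip_suml ip_lin); under eq_bigr do rewrite (ipZl ip_lin) e_orthonormal.
case: ifP => jg; last first.
  by rewrite big1_seq // => i /= ig; case: eqP => [ij|]; [rewrite -ij ig in jg|rewrite mulr0].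
rewrite (bigD1_seq j) ?fset_uniq //= eqxx mulr1 big1 ?addr0 // => i /negbTE ->.
by rewrite mulr0.
Qed.

Lemma gproj_e g j : gproj g (e j) = if j \in g then e j else 0.
Proof.
rewrite /gproj; under eq_bigr do rewrite e_orthonormal.
case: ifP => jg; last first.
  by rewrite big1_seq // => i /= ig; case: eqP => [ji|]; [rewrite ji ig in jg|rewrite scale0r].
rewrite (bigD1_seq j) ?fset_uniq //= eqxx scale1r big1 ?addr0 // => i.
by rewrite eq_sym => /negbTE ->; rewrite scale0r.
Qed.

Lemma gproj_id g x : gproj g (gproj g x) = gproj g x.
Proof. by rewrite {1}/gproj; apply: eq_big_seq => i ig; rewrite ip_gproj_e ig. Qed.

Lemma gproj_disjoint g h x : [disjoint g & h]%fset -> gproj g (gproj h x) = 0.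
Proof.
move/fdisjointP => gh; rewrite {1}/gproj big1_seq // => i /= ig.
by rewrite ip_gproj_e (negbTE (gh i ig)) scale0r.
Qed.

Lemma continuous_gproj g : continuous (gproj g).
Proof.
apply: continuous_sum => i x; apply: continuousZr_tmp.
exact: continuous_ipl.
Qed.

Variables (G : {fset {fset nat}}) (K : nat).
Hypothesis G_disj : forall g1 g2, g1 \in G -> g2 \in G -> g1 != g2 ->
                          [disjoint g1 & g2]%fset.
Hypothesis HK : (2 <= K)%N.

Local Notation Sigma := (Sigma_K ip e G K).

Definition Gproj y := \sum_(g <- G) gproj g y.

Lemma Gproj_is_linear : linear Gproj.
Proof.
move=> a x y; rewrite /Gproj scaler_sumr -big_split; apply: eq_bigr => g _.
exact: linearP.
Qed.

HB.instance Definition _ := GRing.isLinear.Build R V V *:%R Gproj Gproj_is_linear.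

Lemma gproj_gproj g h y : g \in G -> h \in G ->
  gproj g (gproj h y) = if g == h then gproj h y else 0.
Proof.
move=> gG hG; have [->|gh] := eqVneq g h; first exact: gproj_id.
exact/gproj_disjoint/G_disj.
Qed.

Lemma Gproj_gproj h y : h \in G -> Gproj (gproj h y) = gproj h y.
Proof.
move=> hG; rewrite /Gproj (bigD1_seq h) ?fset_uniq //= gproj_id.
by rewrite big1_seq ?addr0 // => g /andP[gh gG]; rewrite gproj_gproj // (negbTE gh).
Qed.

(* The minimal group support is obtained by dropping the groups on which [y] vanishes. *)
Lemma Sigma_KP y : Sigma y <->
  exists H : {fset {fset nat}},
    [/\ (H `<=` G)%fset, (#|` H| <= K)%N & \sum_(h <- H) gproj h y = y].
Proof.
split=> [[H [[HG Hy _] cardH]]|[H [HG cardH Hy]]]; first by exists H.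
set H0 := [fset h in H | gproj h y != 0]%fset.
have H0H : (H0 `<=` H)%fset by exact: fset_sub.
have H0G : (H0 `<=` G)%fset := fsubset_trans H0H HG.
exists H0; split; last exact: leq_trans (fsubset_leq_card H0H) cardH; split => //.
  rewrite -big_fset_condE big_mkcond -[RHS]Hy; apply: eq_bigr => h _.
  by case: eqP => [->|].
move=> H' H'G H'y; apply/fsubsetP => g; rewrite !inE => /andP[gH gy0].
apply: contraNT gy0 => gH'; apply/eqP.
have gG : g \in G by apply: (fsubsetP HG).
rewrite -H'y linear_sum big1_seq // => h /= hH'.
rewrite gproj_gproj //; last exact: (fsubsetP H'G).
by case: eqP => // gh; rewrite gh hH' in gH'.
Qed.

Lemma Sigma_KZ a y : Sigma y -> Sigma (a *: y).
Proof.
move=> /Sigma_KP [H [HG cardH Hy]]; apply/Sigma_KP; exists H; split => //.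
by under eq_bigr do rewrite linearZ; rewrite -scaler_sumr Hy.
Qed.

Lemma Sigma_K_gprojD g h y y' : g \in G -> h \in G -> Sigma (gproj g y + gproj h y').
Proof.
move=> gG hG; apply/Sigma_KP; exists (g |` [fset h])%fset; split.
- by apply/fsubsetP => k; rewrite !inE => /orP[] /eqP ->.
- by apply: leq_trans HK; rewrite cardfsU1 cardfs1; case: (g \notin _).
have [<-|gh] := eqVneq g h.
  by rewrite fsetUid big_seq_fset1 linearD /= !gproj_id.
rewrite big_fsetU1 ?inE //= big_seq_fset1 !linearD /= !gproj_gproj // !eqxx.
by rewrite [h == g]eq_sym (negbTE gh) addr0 add0r.
Qed.

Lemma Sigma_K_gproj g y : g \in G -> Sigma (gproj g y).
Proof. by move=> gG; have := Sigma_K_gprojD y 0 gG gG; rewrite linear0 addr0. Qed.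

Lemma Sigma_K_sub_fixed : Sigma `<=` [set y | Gproj y = y].
Proof.
move=> y /Sigma_KP [H [HG _ Hy]]; rewrite /= -Hy linear_sum /=.
by apply: eq_big_seq => h hH; rewrite Gproj_gproj //; apply: (fsubsetP HG).
Qed.

Hypothesis G_nontriv : exists2 g, g \in G & g != fset0.

Lemma Sigma_K_atom : exists a0, (Sigma `&` @unit_sphere R V) a0.
Proof.
case: G_nontriv => g gG /fset0Pn [i ig]; exists (e i); split; last exact: norm_e.
by have := Sigma_K_gproj (e i) gG; rewrite gproj_e ig.
Qed.

Lemma fixed_sub_cE : [set y | Gproj y = y] `<=` cE Sigma.
Proof.
move=> y /= <-; rewrite /cE /=; apply: le_lt_trans (ltry _).
apply: atomic_norm_sum_le => [||g gG]; [exact: Sigma_K_atom|exact: Sigma_KZ|].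
exact: Sigma_K_gproj.
Qed.

Lemma cE_Sigma_K : cE Sigma = [set y | Gproj y = y].
Proof.
apply/seteqP; split; last exact: fixed_sub_cE.
apply: cE_sub_fixed; last exact: Sigma_K_sub_fixed.
by apply: continuous_sum => g; exact: continuous_gproj.
Qed.

Lemma descent_set_sub_cE : descent_set (atomic_norm Sigma) Sigma `<=` cE Sigma.
Proof.
rewrite cE_Sigma_K => z [x Sx xz_le] /=.
have xF : Gproj x = x by exact: Sigma_K_sub_fixed.
have xzF : Gproj (x + z) = x + z.
  have : cE Sigma (x + z) by apply: le_lt_trans xz_le _; exact: fixed_sub_cE.
  by rewrite cE_Sigma_K.
by have := linearB Gproj (x + z) x; rewrite /= xzF xF addrC addKr.
Qed.

Lemma fixed_coord_neq0 z : Gproj z = z -> z != 0 ->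
  exists2 g, g \in G & exists2 i, i \in g & ip z (e i) != 0.
Proof.
move=> zF; apply: contraNP => all0; apply/eqP.
rewrite -zF /Gproj big1_seq // => g /= gG; rewrite /gproj big1_seq // => i /= ig.
have [->|zi] := eqVneq (ip z (e i)) 0; first exact: scale0r.
by case: all0; exists g => //; exists i.
Qed.

Lemma descent_witness z g0 i0 : Gproj z = z -> g0 \in G -> i0 \in g0 ->
    ip z (e i0) != 0 ->
  exists2 x, Sigma x & (atomic_norm Sigma (x + z)%R <= atomic_norm Sigma x)%E.
Proof.
move=> zF g0G i0g0 c_neq0; set s := [seq g <- G | g != g0].
have zE : \sum_(g <- s) gproj g z = z - gproj g0 z.
  apply: (addrI (gproj g0 z)); rewrite addrCA subrr addr0 -[RHS]zF big_filter.
  by rewrite /Gproj (bigD1_seq g0) ?fset_uniq.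
have sG g : g \in s -> g \in G /\ g != g0 by rewrite mem_filter => /andP[].
set c := ip z (e i0).
have c_gt0 : 0 < `|c| by rewrite normr_gt0.
set u := (`|c| / c) *: e i0.
set L := \sum_(g <- s) `|gproj g z|.
(* The least [m] allowed by [sum_norm_orth_shift_le]. *)
set m := L / (2 * `|c|).
set x := - (gproj g0 z + (L * m) *: u).
have u_g0 : gproj g0 u = u by rewrite linearZ /= gproj_e i0g0.
have norm_u : `|u| = 1.
  by rewrite normrZ norm_e mulr1 normrM normfV normr_id divff ?normr_eq0.
have u_orth g : g \in s -> ip u (gproj g z) = 0.
  move=> /sG[gG gg0]; have /fdisjointP g0g : [disjoint g0 & g]%fset.
    by apply: G_disj; rewrite // eq_sym.
  by rewrite (ipZl ip_lin) ip_sym ip_gproj_e (negbTE (g0g _ i0g0)) mulr0.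
have ip_z0_u : ip (gproj g0 z) u = `|c|.
  by rewrite (ipZr ip_sym ip_lin) ip_gproj_e i0g0 -/c mulfVK.
clearbody u.
exists x.
  have -> : x = gproj g0 (- (z + (L * m) *: u)) by rewrite linearN linearD linearZ /= u_g0.
  exact: Sigma_K_gproj.
have -> : x + z = \sum_(g <- s) (gproj g z - (`|gproj g z| * m) *: u).
  by rewrite big_split /= sumrN -scaler_suml -mulr_suml zE /x [LHS]addrC opprD addrA.
apply: le_trans (atomic_norm_sum_le _ _ _) _.
- exact: Sigma_K_atom.
- exact: Sigma_KZ.
- move=> g /sG[gG _]; rewrite -u_g0 -linearZ -linearN.
  exact: Sigma_K_gprojD.
apply: le_trans _ (atomic_norm_ge_norm _ x); rewrite lee_fin normrN.
apply: (sum_norm_orth_shift_le ip_sym ip_lin ip_norm) => //.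
  by rewrite /m divr_ge0 ?mulr_ge0 ?sumr_ge0.
rewrite ip_z0_u /m (_ : 2 * _ * _ = L) //.
by field; rewrite gt_eqF.
Qed.

Lemma cE_sub_descent_set : cE Sigma `<=` descent_set (atomic_norm Sigma) Sigma.
Proof.
rewrite cE_Sigma_K => z /= zF.
have [->|z_neq0] := eqVneq z 0.
  exists 0; last by rewrite /= addr0.
  by apply/Sigma_KP; exists fset0%fset; rewrite fsub0set cardfs0 big_seq_fset0.
have [g0 g0G [i0 i0g0 zi0]] := fixed_coord_neq0 zF z_neq0.
by have [x Sx le_x] := descent_witness zF g0G i0g0 zi0; exists x.
Qed.

Lemma descent_set_Sigma_K : descent_set (atomic_norm Sigma) Sigma = cE Sigma.
Proof.
by apply/seteqP; split; [exact: descent_set_sub_cE|exact: cE_sub_descent_set].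
Qed.

End GroupSparseModel.

Lemma descent_set_not_unique_minimizer (R : realType) (V : normedModType R)
    (W : lmodType R) (f : V -> \bar R) (Sigma : set V) (M : {linear V -> W}) z :
  z != 0 -> M z = 0 -> descent_set f Sigma z ->
  exists x0, Sigma x0 /\ ~ unique_minimizer f M x0.
Proof.
move=> z_neq0 Mz [x Sx le_xz]; exists x; split => // x_unique.
have xz_neq_x : x + z <> x.
  by move/(congr1 (fun y => y - x)); rewrite [x + z]addrC addrK subrr; exact/eqP.
have := x_unique (x + z); rewrite linearD Mz addr0 => /(_ erefl xz_neq_x).
by rewrite ltNge le_xz.
Qed.

Theorem proposition7 (R : realType) (V : completeNormedModType R)
  (ip : V -> V -> R) (e : nat -> V)
  (ip_sym : forall x y, ip x y = ip y x)
  (ip_lin : forall (a : R) x y z, ip (a *: x + y) z = a * ip x z + ip y z)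
  (ip_norm : forall x, ip x x = `|x| ^+ 2)
  (e_orthonormal : forall i j, ip (e i) (e j) = (i == j)%:R)
  (e_basis : forall x,
     (fun n => \sum_(i < n) ip x (e i) *: e i) @ \oo --> x)
  (G : {fset {fset nat}})
  (G_disj : forall g1 g2, g1 \in G -> g2 \in G -> g1 != g2 ->
                          [disjoint g1 & g2]%fset)
  (G_nontriv : exists2 g, g \in G & g != fset0)
  (K : nat) (HK : (2 <= K)%N) :
  let Sigma := Sigma_K ip e G K in
  descent_set (atomic_norm Sigma) Sigma = cE Sigma /\
  (forall (W : lmodType R) (M : {linear V -> W}),
     (exists z, z != 0 /\ M z = 0 /\ cE Sigma z) ->
     exists x0, Sigma x0 /\ ~ unique_minimizer (atomic_norm Sigma) M x0).
Proof.
move=> Sigma.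
have descentE : descent_set (atomic_norm Sigma) Sigma = cE Sigma.
  exact: (descent_set_Sigma_K ip_sym ip_lin ip_norm e_orthonormal G_disj HK G_nontriv).
split=> // W M [z [z_neq0 [Mz zE]]].
by apply: descent_set_not_unique_minimizer z_neq0 Mz _; rewrite descentE.
Qed.
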